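(* Let $R\ge 1$, let $\mathbf{x}=(x_1,\dots,x_R)$ be a vector of pairwise distinct reals and $\mathbf{c}\in\mathbb{R}^R$. If $R$ is odd, then $\det B(\mathbf{x},\mathbf{c})=0$. If $R=2T$ is even, then $$\det B(\mathbf{x},\mathbf{c})=\prod_{k=1}^R c_k^2\sum_{(m_i,n_i)_{i=1}^T\in E}\ \prod_{i=1}^T a_{m_i,n_i}^2=\sum_{(m_i,n_i)_{i=1}^T\in E}\ \prod_{i=1}^T b_{m_i,n_i}^2,$$ where $E$ is the set of families $(m_i,n_i)_{i=1}^T$ of integer pairs such that $\bigcup_{i=1}^T\{m_i,n_i\}=\{1,\dots,R\}$, $m_i<n_i$ for all $i$, and $m_1<m_2<\dots<m_T$ (i.e. $E$ indexes the perfect matchings of $\{1,\dots,R\}$).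
   Context: For pairwise distinct reals $x_1,\dots,x_R$, $a_{m,n}=a_{m,n}(\mathbf{x})=0$ if $m=n$ and $a_{m,n}=\frac{1}{x_m-x_n}$ if $m\ne n$. For $\mathbf{c}=(c_1,\dots,c_R)\in\mathbb{R}^R$, $B(\mathbf{x},\mathbf{c})$ is the $R\times R$ matrix with entries $b_{m,n}=c_mc_na_{m,n}$ (so $b_{m,m}=0$ and $b_{m,n}=\frac{c_mc_n}{x_m-x_n}$ for $m\ne n$). *)

From HB Require Import structures.
From mathcomp Require Import all_boot all_order all_algebra.
Set Implicit Arguments. Unset Strict Implicit. Unset Printing Implicit Defensive.
Import Order.TTheory GRing.Theory Num.Theory.
Local Open Scope ring_scope.

(* a_{m,n} = 0 if m = n, 1/(x_m - x_n) otherwise. Indices are 0-based ('I_R). *)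
Definition amat (F : realFieldType) (R : nat) (x : 'I_R -> F) : 'M[F]_R :=
  \matrix_(m < R, n < R) (if m == n then 0 else (x m - x n)^-1).

Definition Bmat (F : realFieldType) (R : nat) (x c : 'I_R -> F) : 'M[F]_R :=
  \matrix_(m < R, n < R) (c m * c n * amat x m n).

Definition in_E (T R : nat) (p : {ffun 'I_T -> 'I_R * 'I_R}) : bool :=
  [&& [forall i, ((p i).1 < (p i).2)%N],
      [forall i : 'I_T, forall j : 'I_T, ((i < j)%N ==> ((p i).1 < (p j).1)%N)] &
      [forall k : 'I_R, exists i, (k == (p i).1) || (k == (p i).2)]].

From HB Require Import structures.
From mathcomp Require Import all_boot all_order all_algebra all_fingroup.
From mathcomp Require Import ring.
Set Implicit Arguments. Unset Strict Implicit. Unset Printing Implicit Defensive.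
Import Order.TTheory GRing.Theory Num.Theory.
Local Open Scope ring_scope.

(* B is skew-symmetric, so its determinant vanishes in odd dimension.  For the
   even case we expand principal minors: writing pminor A S for the
   determinant of the submatrix of A indexed by S and a for the least index
   of S, a first-row expansion of a skew matrix with zero diagonal whose
   entries satisfy the three-term identity
       A a j * A i a = A i j * (h a i - h a j)      (i, j, a distinct)
   collapses to
       pminor A S = sum_(b in S, b <> a) A a b ^ 2 * pminor A (S \ {a, b}),
   because the contributions of the non-fixed points of each permutation
   telescope to zero.  Ordered perfect matchings of S (pairs m_i < n_i with
   increasing first components) obey the same recursion, the first pair being
   (a, b); hence pminor A S is the sum over the perfect matchings of S of the
   products of the squared matched entries.  The matrix B satisfies the
   three-term identity with h a i = c_a^2 / (x_i - x_a), which gives the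
   second formula; the first follows from B = diag(c) a diag(c). *)

Lemma perm_on_setD1 (T : finType) (S : {set T}) (a : T) (t : {perm T}) :
  perm_on (S :\ a) t = perm_on S t && (t a == a).
Proof.
apply/idP/andP => [tSa|[/subsetP tS ta]].
  split; first exact: subset_trans tSa (subsetDl _ _).
  by apply/negPn/negP => /(subsetP tSa); rewrite !inE eqxx.
apply/subsetP => y ty; rewrite !inE (tS y ty) andbT.
by apply: contraNneq ty => ->; rewrite ta.
Qed.

(* Summing over the permutations supported by S, grouped by the preimage i of
   a fixed a in S: each such permutation is (i a) composed with a permutation
   supported by S \ {a}. *)
Lemma sum_perm_on_split (T : finType) (R : nzSemiRingType) (S : {set T}) (a : T)
    (f : {perm T} -> R) :
  a \in S ->
  \sum_(s | perm_on S s) f s =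
  \sum_(i in S) \sum_(t | perm_on (S :\ a) t) f (tperm i a * t)%g.
Proof.
move=> aS.
rewrite (partition_big (fun s : {perm T} => (s^-1)%g a) (mem S)) /=; last first.
  by move=> s sS; rewrite perm_closed ?perm_onV.
apply: eq_bigr => i iS; rewrite (reindex_inj (mulgI (tperm i a))) /=.
apply: eq_bigl => t.
have tpS : perm_on S (tperm i a).
  by apply: subset_trans (tperm_on _ _) _; apply/subsetP => y; rewrite !inE => /orP[]/eqP->.
have -> : perm_on S (tperm i a * t)%g = perm_on S t.
  apply/idP/idP => [h|]; last exact: perm_onM.
  by rewrite -(mulKg (tperm i a) t) tpermV; apply: perm_onM.
rewrite perm_on_setD1 invMg permM tpermV; congr (_ && _).
apply/eqP/eqP => [h|ta].
  have inv_a : (t^-1)%g a = a by rewrite -(tpermK i a ((t^-1)%g a)) h tpermL.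
  by rewrite -{1}inv_a permKV.
by rewrite -[in (t^-1)%g a]ta permK tpermR.
Qed.

Lemma sum_perm_on_diff (R : zmodType) (T : finType) (S : {set T}) (t : {perm T})
    (h : T -> R) :
  perm_on S t -> \sum_(i in S) (h i - h (t i)) = 0.
Proof.
move=> tS; rewrite sumrB [X in X - _](reindex_inj (@perm_inj _ t)) /=.
by rewrite (eq_bigl (mem S)) ?subrr // => i; rewrite perm_closed.
Qed.

Definition pminor (R : comNzRingType) (n : nat) (A : 'M[R]_n) (S : {set 'I_n}) : R :=
  \sum_(s : 'S_n | perm_on S s) (-1) ^+ s * \prod_(k in S) A k (s k).

Lemma det_pminor (R : comNzRingType) (n : nat) (A : 'M[R]_n) : \det A = pminor A setT.
Proof.
apply: eq_big => [s|s _]; first by apply/esym/subsetP => y; rewrite in_setT.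
by congr (_ * _); apply: eq_bigl => k; rewrite in_setT.
Qed.

Lemma pminor_set0 (R : comNzRingType) (n : nat) (A : 'M[R]_n) : pminor A set0 = 1.
Proof.
rewrite /pminor (big_pred1 1%g) => [|s]; first by rewrite odd_perm1 big_set0 mulr1.
apply/idP/eqP => [s0|->]; last exact: perm_on1.
by apply: perm_on_id s0 _; rewrite cards0.
Qed.

(* Sign and weight of the permutation (i a) * t, where t fixes a: it maps a
   to t i and i to a. *)
Lemma pminor_term_tperm (R : comNzRingType) (n : nat) (A : 'M[R]_n) (S : {set 'I_n})
    (a i : 'I_n) (t : 'S_n) :
  a \in S -> i \in S :\ a -> perm_on (S :\ a) t ->
  (-1) ^+ (tperm i a * t)%g * \prod_(k in S) A k ((tperm i a * t)%g k) =
  - ((-1) ^+ t * (A a (t i) * A i a * \prod_(k in S :\ a :\ i) A k (t k))).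
Proof.
move=> aS iSa tSa.
have ia : i != a by move: iSa; rewrite !inE => /andP[].
have ta : t a = a by rewrite (out_perm tSa) // !inE eqxx.
rewrite odd_mul_tperm ia /= signrN !mulNr; congr (- (_ * _)).
rewrite (big_setD1 a aS) (big_setD1 i iSa) /= !permM tpermR tpermL ta mulrA.
congr (_ * _); apply: eq_bigr => k; rewrite !inE => /and3P[ki ka _].
by rewrite permM tpermD // eq_sym.
Qed.

Section SkewExpansion.
Variables (R : comNzRingType) (n : nat) (A : 'M[R]_n).
Hypothesis A_skew : forall i j, A i j = - A j i.
Hypothesis A_diag : forall i, A i i = 0.

(* First-row expansion of a principal minor of a skew matrix with zero
   diagonal satisfying the three-term identity at a: only the terms where
   i is matched with a and fixed by the rest of the permutation survive. *)
Lemma pminor_expand (S : {set 'I_n}) (a : 'I_n) (h : 'I_n -> R) :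
  a \in S ->
  (forall i j, i != a -> j != a -> i != j -> A a j * A i a = A i j * (h i - h j)) ->
  pminor A S = \sum_(i in S :\ a) A a i ^+ 2 * pminor A (S :\ a :\ i).
Proof.
move=> aS three_term.
rewrite /pminor (sum_perm_on_split _ aS) (bigD1 a aS) /=.
rewrite [X in X + _]big1 ?add0r; last first.
  move=> t tSa; rewrite tperm1 mul1g (bigD1 a aS) /= (out_perm tSa) ?A_diag ?mul0r ?mulr0 //.
  by rewrite !inE eqxx.
set S' := S :\ a.
rewrite (eq_bigl (mem S')); last by move=> i; rewrite !inE andbC.
rewrite (eq_bigr (fun i => \sum_(t | perm_on S' t)
    - ((-1) ^+ t * (A a (t i) * A i a * \prod_(k in S' :\ i) A k (t k))))); last first.
  by move=> i iS'; apply: eq_bigr => t tS; apply: pminor_term_tperm.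
rewrite [RHS](eq_bigr (fun i => \sum_(t | perm_on S' t)
    A a i ^+ 2 * (if t i == i then (-1) ^+ t * \prod_(k in S' :\ i) A k (t k) else 0)));
  last first.
  move=> i iS'; rewrite big_distrr /= big_mkcond [RHS]big_mkcond /=.
  apply: eq_bigr => t _; rewrite perm_on_setD1.
  by case: (perm_on S' t); case: (t i == i); rewrite /= ?mulr0.
rewrite [LHS]exchange_big [RHS]exchange_big /=; apply: eq_bigr => t tS.
set sg := (-1) ^+ _; clearbody sg.
have ne_a i : i \in S' -> i != a by rewrite !inE => /andP[].
have split_i i : i \in S' ->
    - (sg * (A a (t i) * A i a * \prod_(k in S' :\ i) A k (t k))) =
    A a i ^+ 2 * (if t i == i then sg * \prod_(k in S' :\ i) A k (t k) else 0)
    - sg * \prod_(k in S') A k (t k) * (h i - h (t i)).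
  move=> iS'; rewrite (big_setD1 i iS') /=.
  case: eqP => [->|/eqP ti_i]; first by rewrite subrr (A_skew i a); ring.
  have tiS' : t i \in S' by rewrite perm_closed.
  by rewrite three_term ?ne_a // 1?eq_sym //; ring.
rewrite (eq_bigr _ split_i) sumrB -big_distrr /= sum_perm_on_diff //.
by rewrite mulr0 subr0.
Qed.
End SkewExpansion.

Definition matching (T R : nat) (S : {set 'I_R}) (p : {ffun 'I_T -> 'I_R * 'I_R}) : bool :=
  [&& [forall i, ((p i).1 < (p i).2)%N],
      [forall i : 'I_T, forall j : 'I_T, ((i < j)%N ==> ((p i).1 < (p j).1)%N)] &
      [forall k : 'I_R, (k \in S) == [exists i, (k == (p i).1) || (k == (p i).2)]]].

Definition matching_sum (G : comNzRingType) (T R : nat) (S : {set 'I_R})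
    (w : 'I_R -> 'I_R -> G) : G :=
  \sum_(p : {ffun 'I_T -> 'I_R * 'I_R} | matching S p) \prod_(i < T) w (p i).1 (p i).2.

Section Matchings.
Variables (T R : nat).
Implicit Types (S : {set 'I_R}).

Lemma matchingP S (p : {ffun 'I_T -> 'I_R * 'I_R}) :
  reflect [/\ forall i, ((p i).1 < (p i).2)%N,
              forall i j : 'I_T, (i < j)%N -> ((p i).1 < (p j).1)%N &
              forall k, (k \in S) = [exists i, (k == (p i).1) || (k == (p i).2)]]
          (matching S p).
Proof.
apply: (iffP and3P) => [[/forallP lt_pair /forallP incr /forallP cover]|[lt_pair incr cover]].
  split=> //; last by move=> k; apply/eqP/cover.
  by move=> i j; move: (incr i) => /forallP /(_ j) /implyP.
split; apply/forallP => //; last by move=> k; rewrite cover.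
by move=> i; apply/forallP => j; apply/implyP/incr.
Qed.

Definition endpoint (p : {ffun 'I_T -> 'I_R * 'I_R}) (ie : 'I_T * bool) : 'I_R :=
  if ie.2 then (p ie.1).1 else (p ie.1).2.

Lemma matching_endpoint_in S p ie : matching S p -> endpoint p ie \in S.
Proof.
case/matchingP=> _ _ ->; apply/existsP; exists ie.1.
by rewrite /endpoint; case: ie.2; rewrite eqxx ?orbT.
Qed.

(* When #|S| = 2T, the 2T entries of a matching of S cover S, hence are
   pairwise distinct. *)
Lemma matching_endpoint_inj S p :
  matching S p -> #|S| = (2 * T)%N -> injective (endpoint p).
Proof.
move=> M cS.
have im : endpoint p @: setT = S.
  apply/setP => k; apply/imsetP/idP => [[ie _ ->]|]; first exact: matching_endpoint_in.
  case/matchingP: M => _ _ ->; case/existsP => i /orP[]/eqP ->.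
    by exists (i, true).
  by exists (i, false).
have : #|endpoint p @: setT| == #|[set: 'I_T * bool]|.
  by rewrite im cardsT card_prod card_ord card_bool cS mulnC.
by move/imset_injP => inj ie1 ie2; apply: inj; rewrite inE.
Qed.
End Matchings.

Section MatchingRecursion.
Variables (T R : nat).
Implicit Types (S : {set 'I_R}) (a b : 'I_R) (q : {ffun 'I_T -> 'I_R * 'I_R}).

Definition mcons a b q : {ffun 'I_T.+1 -> 'I_R * 'I_R} :=
  [ffun j => if unlift ord0 j is Some j' then q j' else (a, b)].

Lemma mcons0 a b q : mcons a b q ord0 = (a, b).
Proof. by rewrite ffunE unlift_none. Qed.

Lemma mconsS a b q j : mcons a b q (lift ord0 j) = q j.
Proof. by rewrite ffunE liftK. Qed.

Lemma matching_behead S a b q :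
  #|S| = (2 * T.+1)%N -> matching S (mcons a b q) -> matching (S :\ a :\ b) q.
Proof.
move=> cS M; have inj := matching_endpoint_inj M cS.
case/matchingP: M => lt_pair incr cover; apply/matchingP; split.
- by move=> j; have := lt_pair (lift ord0 j); rewrite mconsS.
- move=> j1 j2 lt12; have := incr (lift ord0 j1) (lift ord0 j2).
  by rewrite !mconsS !lift0; apply.
move=> k; rewrite !inE cover.
apply/and3P/existsP => [[kb ka /existsP[i]]|[j kq]].
  case: (unliftP ord0 i) => [j|] ->; rewrite ?mconsS ?mcons0 /=; first by exists j.
  by rewrite (negbTE ka) (negbTE kb).
have [e ke] : exists e, k = endpoint (mcons a b q) (lift ord0 j, e).
  by case/orP: kq => /eqP ->; [exists true | exists false]; rewrite /endpoint /= mconsS.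
have ne e' : k != endpoint (mcons a b q) (ord0, e').
  by rewrite ke (inj_eq inj) xpair_eqE eq_sym (negbTE (neq_lift _ _)).
have := ne true; have := ne false; rewrite /endpoint /= mcons0 /= => kb ka.
split=> //; apply/existsP; exists (lift ord0 j); rewrite mconsS; exact: kq.
Qed.

Lemma matching_cons S a b q :
  a \in S -> (forall k, k \in S -> (a <= k)%N) -> b \in S :\ a ->
  matching (S :\ a :\ b) q -> matching S (mcons a b q).
Proof.
move=> aS a_min bSa /matchingP[lt_pair incr cover].
have [ba bS] : b != a /\ b \in S by move: bSa; rewrite !inE => /andP[].
have above_a k : k \in S :\ a :\ b -> (a < k)%N /\ k \in S.
  rewrite !inE => /and3P[_ ka kS]; split=> //.
  by rewrite ltn_neqAle (a_min _ kS) andbT eq_sym val_eqE ka.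
have q_above j : (a < (q j).1)%N.
  have /above_a[] // : (q j).1 \in S :\ a :\ b.
  by rewrite cover; apply/existsP; exists j; rewrite eqxx.
apply/matchingP; split.
- move=> j; case: (unliftP ord0 j) => [j'|] ->; rewrite ?mconsS ?mcons0 //=.
  by rewrite ltn_neqAle (a_min _ bS) andbT eq_sym val_eqE ba.
- move=> j1 j2; case: (unliftP ord0 j1) => [j1'|] ->;
    case: (unliftP ord0 j2) => [j2'|] ->; rewrite ?mconsS ?mcons0 ?lift0 /= ?q_above //.
  by rewrite ltnS; apply: incr.
move=> k; apply/idP/existsP => [kS|[j]].
  have [-> | ka] := eqVneq k a; first by exists ord0; rewrite mcons0 eqxx.
  have [-> | kb] := eqVneq k b; first by exists ord0; rewrite mcons0 eqxx orbT.
  have : k \in S :\ a :\ b by rewrite !inE kb ka kS.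
  by rewrite cover => /existsP[j' kq]; exists (lift ord0 j'); rewrite mconsS.
case: (unliftP ord0 j) => [j'|] ->; rewrite ?mconsS ?mcons0 /=.
  move=> kq; have /above_a[] // : k \in S :\ a :\ b.
  by rewrite cover; apply/existsP; exists j'.
by case/orP => /eqP ->.
Qed.

Lemma matching_head S a (p : {ffun 'I_T.+1 -> 'I_R * 'I_R}) :
  matching S p -> a \in S -> (forall k, k \in S -> (a <= k)%N) -> (p ord0).1 = a.
Proof.
move=> M aS a_min; have /matchingP[lt_pair incr cover] := M.
apply/val_inj/eqP; rewrite eqn_leq (a_min _ (matching_endpoint_in (ord0, true) M)) andbT.
have first_min j : ((p ord0).1 <= (p j).1)%N.
  by case: (unliftP ord0 j) => [j'|] -> //; apply/ltnW/incr; rewrite lift0.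
move: aS; rewrite cover => /existsP[j /orP[]/eqP ->]; first exact: first_min.
exact/ltnW/(leq_ltn_trans (first_min j) (lt_pair j)).
Qed.
End MatchingRecursion.

Lemma matching_sum0 (G : comNzRingType) (R : nat) (w : 'I_R -> 'I_R -> G) :
  matching_sum 0 set0 w = 1.
Proof.
rewrite /matching_sum (eq_bigr (fun=> 1)) => [|p _]; last by rewrite big_ord0.
rewrite (eq_bigl (mem [set: {ffun 'I_0 -> 'I_R * 'I_R}])) => [|p].
  by rewrite sumr_const cardsT card_ffun card_ord expn0.
rewrite [RHS]inE; apply/matchingP; split; try by case.
by move=> k; rewrite in_set0; apply/esym/existsP => -[[]].
Qed.

Lemma matching_sum_expand (G : comNzRingType) (T R : nat) (S : {set 'I_R}) (a : 'I_R)
    (w : 'I_R -> 'I_R -> G) :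
  #|S| = (2 * T.+1)%N -> a \in S -> (forall k, k \in S -> (a <= k)%N) ->
  matching_sum T.+1 S w = \sum_(b in S :\ a) w a b * matching_sum T (S :\ a :\ b) w.
Proof.
move=> cS aS a_min.
rewrite /matching_sum (partition_big (fun p : {ffun 'I_T.+1 -> 'I_R * 'I_R} => (p ord0).2) (mem (S :\ a))) /=; last first.
  move=> p M; rewrite !inE (matching_endpoint_in (ord0, false) M) andbT.
  case/matchingP: (M) => lt_pair _ _; have := lt_pair ord0.
  by rewrite (matching_head M aS a_min); apply: contraTneq => ->; rewrite ltnn.
apply: eq_bigr => b bSa; rewrite big_distrr /=.
rewrite (reindex (mcons a b)) /=; last first.
  exists (fun p => [ffun j => p (lift ord0 j)]) => [q _|p].
    by apply/ffunP => j; rewrite ffunE mconsS.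
  rewrite inE => /andP[M /eqP pb]; apply/ffunP => j.
  case: (unliftP ord0 j) => [j'|] ->; first by rewrite mconsS ffunE.
  by rewrite mcons0 -(matching_head M aS a_min) -pb; case: (p ord0).
apply: eq_big => [q|q _]; last first.
  by rewrite big_ord_recl mcons0; congr (_ * _); apply: eq_bigr => j _; rewrite mconsS.
rewrite mcons0 eqxx andbT; apply/idP/idP; first exact: matching_behead.
exact: matching_cons.
Qed.

Lemma matching_setT (T R : nat) (p : {ffun 'I_T -> 'I_R * 'I_R}) :
  matching setT p = in_E p.
Proof.
congr [&& _, _ & _]; apply: eq_forallb => k.
by rewrite in_setT; case: [exists _, _].
Qed.

Section SkewMatchingExpansion.
Variables (R : comNzRingType) (n : nat) (A : 'M[R]_n) (h : 'I_n -> 'I_n -> R).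
Hypothesis A_skew : forall i j, A i j = - A j i.
Hypothesis A_diag : forall i, A i i = 0.
Hypothesis A_three_term : forall a i j, i != a -> j != a -> i != j ->
  A a j * A i a = A i j * (h a i - h a j).

Lemma pminor_matching_sum (T : nat) (S : {set 'I_n}) :
  #|S| = (2 * T)%N -> pminor A S = matching_sum T S (fun i j => A i j ^+ 2).
Proof.
elim: T S => [|T IH] S cS.
  have -> : S = set0 by apply/eqP; rewrite -cards_eq0 cS.
  by rewrite pminor_set0 matching_sum0.
have [k0 k0S] : exists k0, k0 \in S by apply/set0Pn; rewrite -cards_eq0 cS mulnS.
have [a aS a_min] : exists2 a, a \in S & forall k, k \in S -> (a <= k)%N.
  by case: (arg_minnP (fun k : 'I_n => val k) k0S) => a; exists a.
rewrite (pminor_expand A_skew A_diag aS (@A_three_term a)).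
rewrite (matching_sum_expand _ cS aS a_min); apply: eq_bigr => b bSa; rewrite IH //.
by move: cS; rewrite (cardsD1 a) aS (cardsD1 b (S :\ a)) bSa mulnS => -[].
Qed.
End SkewMatchingExpansion.

(* A skew-symmetric matrix over a numeric domain has determinant 0 in odd
   dimension, since \det A = \det A^T = (-1)^n \det A. *)
Lemma det_skew_odd (R : numDomainType) (n : nat) (A : 'M[R]_n) :
  A^T = - A -> odd n -> \det A = 0.
Proof.
move=> skewA odd_n; apply/eqP; rewrite -eqNr.
by rewrite -{2}det_tr skewA -scaleN1r detZ -signr_odd odd_n expr1 mulN1r.
Qed.

Section CauchyMatrix.
Variables (F : realFieldType) (R : nat) (x : 'I_R -> F).
Hypothesis x_inj : injective x.

Lemma amat_skew i j : amat x i j = - amat x j i.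
Proof.
rewrite !mxE eq_sym; case: eqP => _; first by rewrite oppr0.
by rewrite -invrN opprB.
Qed.

Lemma Bmat_skew (c : 'I_R -> F) i j : Bmat x c i j = - Bmat x c j i.
Proof. by rewrite mxE [Bmat x c j i]mxE amat_skew mulrN (mulrC (c i)). Qed.

Lemma Bmat_diag (c : 'I_R -> F) i : Bmat x c i i = 0.
Proof. by rewrite !mxE eqxx mulr0. Qed.

(* The three-term identity for B, with h a i = c_a^2 a_{i,a}:
   b_{a,j} b_{i,a} = b_{i,j} c_a^2 (a_{i,a} - a_{j,a}), which is the partial
   fraction identity 1/((x_a - x_j)(x_i - x_a)) =
   (1/(x_i - x_j)) (1/(x_i - x_a) - 1/(x_j - x_a)). *)
Lemma Bmat_three_term (c : 'I_R -> F) a i j : i != a -> j != a -> i != j ->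
  Bmat x c a j * Bmat x c i a =
  Bmat x c i j * (c a ^+ 2 * amat x i a - c a ^+ 2 * amat x j a).
Proof.
move=> ia ja ij.
have dx u v : u != v -> x u - x v != 0 by move=> uv; rewrite subr_eq0 (inj_eq x_inj).
have [ai aj ji] : [/\ a != i, a != j & j != i] by split; rewrite eq_sym.
by rewrite !mxE !ifN //; field; rewrite !dx.
Qed.

Lemma Bmat_diag_mx (c : 'I_R -> F) :
  Bmat x c = diag_mx (\row_k c k) *m amat x *m diag_mx (\row_k c k).
Proof.
apply/matrixP => i j.
rewrite mul_mx_diag mul_diag_mx !mxE.
ring.
Qed.

Lemma Bmat1 : Bmat x (fun=> 1) = amat x.
Proof. by apply/matrixP => i j; rewrite mxE !mul1r. Qed.

Lemma det_Bmat (c : 'I_R -> F) : \det (Bmat x c) = (\prod_k c k ^+ 2) * \det (amat x).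
Proof.
rewrite Bmat_diag_mx !det_mulmx det_diag prodrXl.
under eq_bigr do rewrite mxE.
by rewrite mulrC mulrA -expr2.
Qed.
End CauchyMatrix.

Theorem theorem2 (F : realFieldType) (R : nat) (x c : 'I_R -> F) :
  (1 <= R)%N -> injective x ->
  (odd R -> \det (Bmat x c) = 0) /\
  (forall T : nat, R = (2 * T)%N ->
     \det (Bmat x c) =
       (\prod_(k < R) c k ^+ 2) *
       \sum_(p : {ffun 'I_T -> 'I_R * 'I_R} | in_E p)
          \prod_(i < T) amat x (p i).1 (p i).2 ^+ 2
     /\
     \det (Bmat x c) =
       \sum_(p : {ffun 'I_T -> 'I_R * 'I_R} | in_E p)
          \prod_(i < T) Bmat x c (p i).1 (p i).2 ^+ 2).
Proof.
move=> _ x_inj; split=> [odd_R|T RT].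
  apply: det_skew_odd odd_R; apply/matrixP => i j.
  by rewrite mxE [RHS]mxE Bmat_skew.
have cardT : #|[set: 'I_R]| = (2 * T)%N by rewrite cardsT card_ord RT.
have expand (d : 'I_R -> F) :
    \det (Bmat x d) = matching_sum T setT (fun i j => Bmat x d i j ^+ 2).
  rewrite det_pminor.
  exact: (pminor_matching_sum (Bmat_skew x d) (Bmat_diag x d)
                               (Bmat_three_term x_inj d) cardT).
have sum_E (w : 'I_R -> 'I_R -> F) :
    matching_sum T setT w = \sum_(p | in_E p) \prod_(i < T) w (p i).1 (p i).2.
  by apply: eq_bigl => p; rewrite matching_setT.
split; last by rewrite expand sum_E.
by rewrite det_Bmat -Bmat1 expand sum_E.
Qed.
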